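(* Let $M=P+\varepsilon D\in\mathbb{DH}[t]$ be monic with $\operatorname{mrpf}(P)=1$, and write $P\overline{P}=\prod_{i=1}^m N_i^{n_i}$ with pairwise coprime, irreducible, monic quadratic polynomials $N_1,\dots,N_m\in\mathbb{R}[t]$ and positive integers $n_1,\dots,n_m$. Then $M$ admits a factorization $M=(t-h_1)(t-h_2)\cdots(t-h_k)$ with $h_1,\dots,h_k\in\mathbb{DH}$ if and only if $\prod_{i=1}^m N_i^{n_i-1}$ divides the norm polynomial $M\overline{M}$ in $\mathbb{D}[t]$ (equivalently, $\prod_{i=1}^m N_i^{n_i-1}$ divides the dual part $P\overline{D}+D\overline{P}$ of $M\overline{M}$ in $\mathbb{R}[t]$).
   Context: $\mathbb{D}=\mathbb{R}[\varepsilon]/\langle\varepsilon^2\rangle$ denotes the dual numbers. $\mathbb{H}$ denotes the real quaternions with basis $1,\mathbf{i},\mathbf{j},\mathbf{k}$, $\mathbf{i}^2=\mathbf{j}^2=\mathbf{k}^2=\mathbf{i}\mathbf{j}\mathbf{k}=-1$. The dual quaternions $\mathbb{DH}$ are the $\mathbb{D}$-algebra $\mathbb{H}\otimes_{\mathbb{R}}\mathbb{D}$ ($\varepsilon$ commutes with $\mathbf{i},\mathbf{j},\mathbf{k}$). The conjugate of $q=q_0+q_1\mathbf{i}+q_2\mathbf{j}+q_3\mathbf{k}$ ($q_i\in\mathbb{D}$) is $\overline{q}=q_0-q_1\mathbf{i}-q_2\mathbf{j}-q_3\mathbf{k}$. $\mathbb{DH}[t]$ is the ring of polynomials with dual quaternion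 coefficients in which $t$ commutes with all coefficients. For $M=\sum m_it^i$, $\overline{M}=\sum\overline{m_i}t^i$ and the norm polynomial is $M\overline{M}=\overline{M}M\in\mathbb{D}[t]$. Every $M\in\mathbb{DH}[t]$ is written $M=P+\varepsilon D$ with $P,D\in\mathbb{H}[t]$ (primal and dual part); then $M\overline{M}=P\overline{P}+\varepsilon(P\overline{D}+D\overline{P})$. For $P\in\mathbb{H}[t]$, $\operatorname{mrpf}(P)$ denotes the maximal (monic) real polynomial factor of $P$, i.e. the monic $c\in\mathbb{R}[t]$ of largest degree with $P=cP'$ for some $P'\in\mathbb{H}[t]$; $\operatorname{mrpf}(P)=1$ means $P$ has no real polynomial factor of positive degree. *)

From HB Require Import structures.
From mathcomp Require Import all_boot all_order all_algebra.
From mathcomp Require Import reals.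
Set Implicit Arguments. Unset Strict Implicit. Unset Printing Implicit Defensive.
Import Order.TTheory GRing.Theory Num.Theory.
Local Open Scope ring_scope.

(* Quaternions with coefficients in a commutative ring A:
   q = qr + qi i + qj j + qk k.  With A = R we get H, with A = {poly R} we get
   H[t] (t central, i.e. H (x) R[t]). *)
Record quat (A : Type) := Quat { qr : A; qi : A; qj : A; qk : A }.

Section Quat.
Variable A : comNzRingType.
Definition q0 : quat A := Quat 0 0 0 0.
Definition q1 : quat A := Quat 1 0 0 0.
Definition qadd (a b : quat A) : quat A :=
  Quat (qr a + qr b) (qi a + qi b) (qj a + qj b) (qk a + qk b).
Definition qopp (a : quat A) : quat A := Quat (- qr a) (- qi a) (- qj a) (- qk a).
(* Hamilton product: i^2 = j^2 = k^2 = ijk = -1 *)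
Definition qmul (a b : quat A) : quat A :=
  Quat (qr a * qr b - qi a * qi b - qj a * qj b - qk a * qk b)
       (qr a * qi b + qi a * qr b + qj a * qk b - qk a * qj b)
       (qr a * qj b - qi a * qk b + qj a * qr b + qk a * qi b)
       (qr a * qk b + qi a * qj b - qj a * qi b + qk a * qr b).
Definition qconj (a : quat A) : quat A := Quat (qr a) (- qi a) (- qj a) (- qk a).
Definition qscale (c : A) (a : quat A) : quat A :=
  Quat (c * qr a) (c * qi a) (c * qj a) (c * qk a).
End Quat.

(* Dual quaternions over A: prim + eps * dual, eps^2 = 0, eps central. *)
Record dquat (A : Type) := DQuat { prim : quat A; dual : quat A }.

Section DQuat.
Variable A : comNzRingType.
Definition dq1 : dquat A := DQuat (q1 A) (q0 A).
Definition dqadd (x y : dquat A) : dquat A :=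
  DQuat (qadd (prim x) (prim y)) (qadd (dual x) (dual y)).
Definition dqopp (x : dquat A) : dquat A := DQuat (qopp (prim x)) (qopp (dual x)).
Definition dqsub (x y : dquat A) : dquat A := dqadd x (dqopp y).
Definition dqmul (x y : dquat A) : dquat A :=
  DQuat (qmul (prim x) (prim y))
        (qadd (qmul (prim x) (dual y)) (qmul (dual x) (prim y))).
Definition dqconj (x : dquat A) : dquat A := DQuat (qconj (prim x)) (qconj (dual x)).
End DQuat.

(* Polynomials: H[t] = quat {poly R}, DH[t] = dquat {poly R}. *)
Section DQPoly.
Variable R : realType.

Definition quatC (h : quat R) : quat {poly R} :=
  Quat (qr h)%:P (qi h)%:P (qj h)%:P (qk h)%:P.
Definition dqC (h : dquat R) : dquat {poly R} := DQuat (quatC (prim h)) (quatC (dual h)).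
Definition dqX : dquat {poly R} := DQuat (Quat 'X 0 0 0) (q0 _).
Definition dqlin (h : dquat R) : dquat {poly R} := dqsub dqX (dqC h).

Definition qcoef (P : quat {poly R}) (i : nat) : quat R :=
  Quat (qr P)`_i (qi P)`_i (qj P)`_i (qk P)`_i.
Definition dqcoef (M : dquat {poly R}) (i : nat) : dquat R :=
  DQuat (qcoef (prim M) i) (qcoef (dual M) i).
Definition qsize (P : quat {poly R}) : nat :=
  maxn (maxn (size (qr P)) (size (qi P))) (maxn (size (qj P)) (size (qk P))).
(* 1 + degree of M (0 iff M = 0) *)
Definition dqsize (M : dquat {poly R}) : nat := maxn (qsize (prim M)) (qsize (dual M)).
Definition dqmonic (M : dquat {poly R}) : Prop :=
  (0 < dqsize M)%N /\ dqcoef M (dqsize M).-1 = dq1 R.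

Definition mrpf_one (P : quat {poly R}) : Prop :=
  ~ exists (c : {poly R}) (P' : quat {poly R}), (1 < size c)%N /\ P = qscale c P'.

(* P Pbar, which is real: its scalar part *)
Definition qnormpoly (P : quat {poly R}) : {poly R} := qr (qmul P (qconj P)).

(* the norm polynomial M Mbar in D[t], given by (primal part, dual part)
   = scalar parts of the (real-valued) products *)
Definition dqnormpoly (M : dquat {poly R}) : {poly R} * {poly R} :=
  let N := dqmul M (dqconj M) in (qr (prim N), qr (dual N)).

(* multiplication in D[t] = {poly R} + eps {poly R} *)
Definition dnum_mul (x y : {poly R} * {poly R}) : {poly R} * {poly R} :=
  (x.1 * y.1, x.1 * y.2 + x.2 * y.1).
Definition dnum_dvd (F : {poly R}) (x : {poly R} * {poly R}) : Prop :=
  exists y : {poly R} * {poly R}, x = dnum_mul (F, 0) y.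

Definition dq_linfact (M : dquat {poly R}) : Prop :=
  exists hs : seq (dquat R), M = foldr (@dqmul _) (dq1 _) (map dqlin hs).
End DQPoly.

From HB Require Import structures.
From mathcomp Require Import all_boot all_order all_algebra.
From mathcomp Require Import reals.
From mathcomp Require Import ring lra zify.
Import Order.TTheory GRing.Theory Num.Theory.
Local Open Scope ring_scope.
Set Implicit Arguments. Unset Strict Implicit. Unset Printing Implicit Defensive.

(* Both directions rest on the multiplicativity of the norm polynomial
   [dqnormM] in D[t] = R[t] + eps R[t].
   - Only if: the primal norm of t - h is an irreducible quadratic, hence one
     of the N_i; multiplying the linear factors one at a time, the dual part of
     the norm stays divisible by prod N_i^(n_i - 1) ([linfact_dual_norm_dvd]).
   - If: by induction on the degree.  Some N_i divides P Pbar; since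
     mrpf(P) = 1, reduction modulo N_i yields a right factor t - p of P with
     norm N_i ([primal_right_factor]).  The divisibility of the dual norm then
     allows to lift it to a right factor t - (p + eps d) of M
     ([dual_right_factor]); the quotient satisfies the same hypotheses with n_i
     decreased by one ([split_linear_factor]).
   The arithmetic of quaternion polynomials modulo a monic quadratic N is done
   on representatives a t + b + N K, with a, b in H. *)

Ltac qdes := repeat match goal with
  | [ q : quat _ |- _ ] => destruct q
  | [ q : dquat _ |- _ ] => destruct q end.
Ltac qunf := cbv beta iota delta [qnormpoly dqnormpoly dnum_mul dqlin dqsub dqmul
  dqadd dqopp dqconj dq1 dqC dqX quatC qmul qadd qopp qconj qscale q0 q1
  qr qi qj qk prim dual fst snd].
Ltac qring := intros; qdes; qunf; try (congr DQuat); try (congr Quat);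
  try (congr pair); ring.

Section QuatRing.
Variable S : comNzRingType.

Lemma dqmulA (X Y Z : dquat S) : dqmul X (dqmul Y Z) = dqmul (dqmul X Y) Z.
Proof. qring. Qed.

Lemma dqmul1 (X : dquat S) : dqmul X (dq1 _) = X.
Proof. qring. Qed.

Lemma dq1mul (X : dquat S) : dqmul (dq1 _) X = X.
Proof. qring. Qed.

Lemma dqconjM (X Y : dquat S) : dqconj (dqmul X Y) = dqmul (dqconj Y) (dqconj X).
Proof. qring. Qed.

Lemma qcongM (N : S) (A B K L : quat S) :
  qmul (qadd A (qscale N K)) (qadd B (qscale N L)) =
  qadd (qmul A B) (qscale N (qadd (qadd (qmul K B) (qmul A L)) (qscale N (qmul K L)))).
Proof. qring. Qed.

Lemma qcongC (N : S) (A K : quat S) :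
  qconj (qadd A (qscale N K)) = qadd (qconj A) (qscale N (qconj K)).
Proof. qring. Qed.

Lemma qcongD (N : S) (A B K L : quat S) :
  qadd (qadd A (qscale N K)) (qadd B (qscale N L)) = qadd (qadd A B) (qscale N (qadd K L)).
Proof. qring. Qed.

Lemma qcongDr (N : S) (L C1 C2 : quat S) :
  qadd (qadd L (qscale N C1)) (qscale N C2) = qadd L (qscale N (qadd C1 C2)).
Proof. qring. Qed.

Lemma qscale_mul (c : S) (X Y : quat S) :
  qmul (qscale c X) Y = qscale c (qmul X Y).
Proof. qring. Qed.

End QuatRing.

Section QuatPolyDefs.
Variable R : realType.

Definition qX : quat {poly R} := Quat 'X 0 0 0.
Definition qXsubC (p : quat R) : quat {poly R} := qadd qX (qopp (quatC p)).
Definition qaffine (a b : quat R) : quat {poly R} :=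
  Quat ((qr a)%:P * 'X + (qr b)%:P) ((qi a)%:P * 'X + (qi b)%:P)
       ((qj a)%:P * 'X + (qj b)%:P) ((qk a)%:P * 'X + (qk b)%:P).
Definition qdot (a b : quat R) : R :=
  qr a * qr b + qi a * qi b + qj a * qj b + qk a * qk b.
Definition qnorm2 (a : quat R) : R := qdot a a.
Definition qvec (a : quat R) : quat R := Quat 0 (qi a) (qj a) (qk a).
Definition Nlin (p : quat R) : {poly R} := qnormpoly (qXsubC p).

End QuatPolyDefs.

Ltac qring_ext := intros; qdes;
  cbv beta iota delta [qX qXsubC qaffine Nlin qnorm2 qdot]; qring.

Section QuatPolyAlgebra.
Variable R : realType.

Lemma Nlin_form (p : quat R) :
  Nlin p = 'X * 'X + (- (2 * qr p))%:P * 'X + (qnorm2 p)%:P.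
Proof. qring_ext. Qed.

Lemma qnormM (X Y : quat {poly R}) :
  qnormpoly (qmul X Y) = qnormpoly X * qnormpoly Y.
Proof. qring. Qed.

Lemma qaffine_mul (N : {poly R}) (n1 n0 : R) (a b c d : quat R) :
  N = 'X * 'X + n1%:P * 'X + n0%:P ->
  qmul (qaffine a b) (qaffine c d) =
  qadd (qaffine (qadd (qadd (qmul a d) (qmul b c)) (qopp (qscale n1 (qmul a c))))
                (qadd (qmul b d) (qopp (qscale n0 (qmul a c)))))
       (qscale N (quatC (qmul a c))).
Proof. move=> ->; qring_ext. Qed.

Lemma qaffineC (a b : quat R) : qconj (qaffine a b) = qaffine (qconj a) (qconj b).
Proof. qring_ext. Qed.

Lemma qaffineD (a b c d : quat R) :
  qadd (qaffine a b) (qaffine c d) = qaffine (qadd a c) (qadd b d).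
Proof. qring_ext. Qed.

Lemma dvdp_qr_cong (N : {poly R}) (X Y : quat {poly R}) :
  (N %| qr (qadd X (qscale N Y))) = (N %| qr X).
Proof. by rewrite /= dvdp_addl // dvdp_mulr. Qed.

Definition dreal (x : {poly R} * {poly R}) : dquat {poly R} :=
  DQuat (Quat x.1 0 0 0) (Quat x.2 0 0 0).

Lemma dqnorm_dreal (Y : dquat {poly R}) : dqmul Y (dqconj Y) = dreal (dqnormpoly Y).
Proof. rewrite /dreal; qring. Qed.

Lemma dreal_comm (x : {poly R} * {poly R}) (Z : dquat {poly R}) :
  dqmul (dreal x) Z = dqmul Z (dreal x).
Proof. rewrite /dreal; case: x => a b; qring. Qed.

Lemma dreal_mul (x y : {poly R} * {poly R}) :
  dqmul (dreal x) (dreal y) = dreal (dnum_mul x y).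
Proof. rewrite /dreal; case: x => a b; case: y => c d; qring. Qed.

(* The norm polynomial is multiplicative: (XY)(XY)bar = X (Y Ybar) Xbar. *)
Lemma dqnormM (X Y : dquat {poly R}) :
  dqnormpoly (dqmul X Y) = dnum_mul (dqnormpoly X) (dqnormpoly Y).
Proof.
have normE Z : dqnormpoly Z = (qr (prim (dqmul Z (dqconj Z))), qr (dual (dqmul Z (dqconj Z)))).
  by [].
rewrite [LHS]normE dqconjM -dqmulA [dqmul Y (dqmul _ _)]dqmulA dqnorm_dreal dreal_comm.
rewrite dqmulA dqnorm_dreal dreal_mul; by case: (dnum_mul _ _).
Qed.

End QuatPolyAlgebra.

Section MonicQuadratic.
Variable R : realType.
Implicit Types (N X : {poly R}) (P : quat {poly R}).

Lemma quadratic_coef (a b : R) (j : nat) :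
  ('X * 'X + a%:P * 'X + b%:P : {poly R})`_j =
  if j == 2%N then 1 else if j == 1%N then a else if j == 0%N then b else 0.
Proof.
rewrite !coefD -expr2 coefXn coefCM coefX coefC.
by case: j => [|[|[|j]]] /=; rewrite ?mulr0 ?mulr1 ?add0r ?addr0.
Qed.

Lemma monic_quadraticE N :
  N \is monic -> size N = 3%N -> N = 'X * 'X + (N`_1)%:P * 'X + (N`_0)%:P.
Proof.
move=> Nmonic Nsize; apply/polyP => j; rewrite quadratic_coef.
case: j => [|[|[|j]]] //=; first by move: Nmonic; rewrite monicE /lead_coef Nsize => /eqP.
by rewrite nth_default // Nsize.
Qed.

Lemma Nlin_monic (p : quat R) : Nlin p \is monic /\ size (Nlin p) = 3%N.
Proof.
have Ncoef j : (Nlin p)`_j = if j == 2%N then 1 else if j == 1%N then - (2 * qr p)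
                             else if j == 0%N then qnorm2 p else 0.
  by rewrite Nlin_form quadratic_coef.
have Nsize : size (Nlin p) = 3%N.
  apply/eqP; rewrite eqn_leq; apply/andP; split.
    by apply/leq_sizeP => -[|[|[|j]]] //; rewrite Ncoef.
  rewrite ltnNge; apply/negP => small.
  by move: (Ncoef 2%N); rewrite nth_default //= => /esym/eqP; rewrite oner_eq0.
by rewrite monicE /lead_coef Nsize Ncoef.
Qed.

Lemma poly_mod_quadratic N X :
  N \is monic -> size N = 3%N -> exists c1 c0 Y, X = c1%:P * 'X + c0%:P + N * Y.
Proof.
move=> Nmonic Nsize; have N0 : N != 0 by rewrite -size_poly_eq0 Nsize.
exists (modp X N)`_1, (modp X N)`_0, (divp X N).
have rem_small : (size (modp X N) < 3)%N by rewrite -Nsize ltn_modp.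
have remE : modp X N = ((modp X N)`_1)%:P * 'X + ((modp X N)`_0)%:P.
  apply/polyP => j; rewrite coefD coefCM coefX coefC.
  case: j => [|[|j]] /=; rewrite ?mulr0 ?mulr1 ?add0r ?addr0 //.
  by rewrite nth_default // -ltnS (leq_trans rem_small).
by rewrite {1}(divp_eq X N) {1}remE; ring.
Qed.

Lemma quat_mod_quadratic N P :
  N \is monic -> size N = 3%N -> exists a b K, P = qadd (qaffine a b) (qscale N K).
Proof.
move=> Nmonic Nsize; case: P => x y z w.
have [a1 [b1 [K1 e1]]] := poly_mod_quadratic x Nmonic Nsize.
have [a2 [b2 [K2 e2]]] := poly_mod_quadratic y Nmonic Nsize.
have [a3 [b3 [K3 e3]]] := poly_mod_quadratic z Nmonic Nsize.
have [a4 [b4 [K4 e4]]] := poly_mod_quadratic w Nmonic Nsize.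
exists (Quat a1 a2 a3 a4), (Quat b1 b2 b3 b4), (Quat K1 K2 K3 K4).
by rewrite /qadd /qaffine /qscale /= -e1 -e2 -e3 -e4.
Qed.

Lemma dvdp_quadratic_affine N (c1 c0 : R) :
  size N = 3%N -> N %| c1%:P * 'X + c0%:P -> c1 = 0 /\ c0 = 0.
Proof.
move=> Nsize; set q := c1%:P * 'X + c0%:P => Ndvd.
have q_small : (size q <= 2)%N.
  apply/leq_sizeP => j j_big; rewrite /q coefD coefCM coefX coefC.
  by case: j j_big => [|[|j]] //= _; rewrite mulr0 addr0.
have q0 : q = 0.
  apply/eqP; apply: contraT => qn0.
  by have := dvdp_leq qn0 Ndvd; rewrite Nsize => /leq_trans /(_ q_small).
have := congr1 (fun r : {poly R} => r`_1) q0; have := congr1 (fun r : {poly R} => r`_0) q0.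
rewrite /q !coefD !coefCM !coefX !coefC /= ?coef0 ?polyseq0 ?nth_nil.
by rewrite mulr1 mulr0 addr0 add0r => -> ->.
Qed.

Lemma Nlin_irreducible_nonreal (p : quat R) :
  irreducible_poly (Nlin p) -> qnorm2 (qvec p) != 0.
Proof.
rewrite /qnorm2 /qdot /= => Nirr; apply/negP => /eqP vec0.
have [ip jp kp] : [/\ qi p = 0, qj p = 0 & qk p = 0] by split; nra.
have Nsq : Nlin p = ('X - (qr p)%:P) * ('X - (qr p)%:P).
  by rewrite Nlin_form /qnorm2 /qdot ip jp kp; ring.
have lin_dvd : ('X - (qr p)%:P) %| Nlin p by rewrite Nsq dvdp_mulr.
have lin_nonconst : size ('X - (qr p)%:P) != 1%N by rewrite size_XsubC.
have := eqp_size ((snd Nirr) _ lin_nonconst lin_dvd).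
by rewrite size_XsubC (proj2 (Nlin_monic p)).
Qed.

End MonicQuadratic.

Section CoprimeProducts.
Variables (K : fieldType) (m : nat) (N : 'I_m -> {poly K}).
Hypothesis N_coprime : forall i j, i != j -> coprimep (N i) (N j).
Implicit Types (n e : 'I_m -> nat) (i : 'I_m).

Definition decr n i : 'I_m -> nat := fun j => if j == i then (n j).-1 else n j.

Lemma prod_decr n i :
  (0 < n i)%N -> \prod_(j < m) N j ^+ n j = N i * \prod_(j < m) N j ^+ decr n i j.
Proof.
move=> ni_gt0; rewrite (bigD1 i) //= [X in _ = _ * X](bigD1 i) //= /decr eqxx.
rewrite mulrA -exprS prednK //; congr (_ * _).
by apply: eq_bigr => j /negbTE ->.
Qed.

Lemma prod_pred_decr n i :
  (1 < n i)%N ->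
  \prod_(j < m) N j ^+ (n j).-1 = N i * \prod_(j < m) N j ^+ (decr n i j).-1.
Proof.
move=> ni_gt1; rewrite (bigD1 i) //= [X in _ = _ * X](bigD1 i) //= /decr eqxx.
have pred_succ : (n i).-1.-1.+1 = (n i).-1 by lia.
rewrite mulrA -exprS pred_succ; congr (_ * _).
by apply: eq_bigr => j /negbTE ->.
Qed.

Lemma prod_pred_decr1 n i :
  n i = 1%N -> \prod_(j < m) N j ^+ (n j).-1 = \prod_(j < m) N j ^+ (decr n i j).-1.
Proof. by move=> ni1; apply: eq_bigr => j _; rewrite /decr; case: eqP => // ->; rewrite ni1. Qed.

Lemma prod_dvd_exponents e n :
  (forall j, e j <= n j)%N -> \prod_(j < m) N j ^+ e j %| \prod_(j < m) N j ^+ n j.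
Proof.
move=> le_en.
have -> : \prod_(j < m) N j ^+ n j =
          \prod_(j < m) N j ^+ e j * \prod_(j < m) N j ^+ (n j - e j).
  by rewrite -big_split; apply: eq_bigr => j _ /=; rewrite -exprD subnKC.
exact: dvdp_mulr.
Qed.

Lemma prod_pred_dvd n : \prod_(j < m) N j ^+ (n j).-1 %| \prod_(j < m) N j ^+ n j.
Proof. by apply: prod_dvd_exponents => j; exact: leq_pred. Qed.

Lemma prod_pred_dvd_decr n i :
  \prod_(j < m) N j ^+ (n j).-1 %| \prod_(j < m) N j ^+ decr n i j.
Proof. by apply: prod_dvd_exponents => j; rewrite /decr; case: eqP => // _; exact: leq_pred. Qed.

Lemma coprimep_prod e i :
  e i = 0%N -> coprimep (N i) (\prod_(j < m) N j ^+ e j).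
Proof.
move=> ei0; elim/big_rec: _ => [|j x _ Nx_coprime]; first exact: coprimep1.
rewrite coprimepMr Nx_coprime andbT.
have [->|neq_ji] := eqVneq j i; first by rewrite ei0 expr0 coprimep1.
by apply: coprimep_expr; apply: N_coprime; rewrite eq_sym.
Qed.

Lemma Ndvd_prod_exponent e i :
  size (N i) != 1%N -> N i %| \prod_(j < m) N j ^+ e j -> e i != 0%N.
Proof.
move=> Ni_nonconst Ndvd; apply/eqP => ei0.
by have := coprimep_dvdl Ndvd (coprimep_prod ei0); rewrite coprimepp (negbTE Ni_nonconst).
Qed.

Lemma quadratic_dvd_prod n (q : {poly K}) :
  (forall i, N i \is monic) -> (forall i, size (N i) = 3%N) ->
  (forall i, irreducible_poly (N i)) ->
  q \is monic -> size q = 3%N -> q %| \prod_(j < m) N j ^+ n j ->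
  exists i, q = N i /\ (0 < n i)%N.
Proof.
move=> N_monic N_size N_irr q_monic q_size q_dvd.
have [/existsP [i not_coprime]|] := boolP [exists i, ~~ coprimep q (N i)].
  have gcd_Ni : gcdp q (N i) %= N i.
    by apply: (snd (N_irr i)); [rewrite -coprimep_def | exact: dvdp_gcdr].
  have Ni_dvd : N i %| q by rewrite -(eqp_dvdl _ gcd_Ni) dvdp_gcdl.
  have qNi : N i = q.
    by apply/eqP; rewrite -eqp_monic // -dvdp_size_eqp // q_size N_size.
  exists i; split=> //; rewrite lt0n; apply: (Ndvd_prod_exponent (e := n)).
    by rewrite N_size.
  by rewrite qNi.
rewrite negb_exists => /forallP all_coprime.
have q_coprime : coprimep q (\prod_(j < m) N j ^+ n j).
  elim/big_rec: _ => [|j x _ qx]; first exact: coprimep1.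
  by rewrite coprimepMr qx andbT; apply: coprimep_expr; rewrite -[coprimep _ _]negbK.
by have := coprimep_dvdl q_dvd q_coprime; rewrite coprimepp q_size.
Qed.

End CoprimeProducts.

Section PrimalFactor.
Variable R : realType.
Implicit Types (a b p : quat R) (N : {poly R}) (P K : quat {poly R}).

Definition qinv a : quat R := qscale (qnorm2 a)^-1 (qconj a).

Lemma qnorm2_eq0 a : qnorm2 a = 0 -> a = q0 R.
Proof.
case: a => a0 a1 a2 a3; rewrite /qnorm2 /qdot /= => a_norm0.
have [-> -> -> ->] : [/\ a0 = 0, a1 = 0, a2 = 0 & a3 = 0] by split; nra.
by [].
Qed.

Lemma qinvKr a b : qnorm2 a != 0 -> qmul a (qmul (qinv a) b) = b.
Proof.
case: a b => a0 a1 a2 a3 [b0 b1 b2 b3]; rewrite /qinv /qnorm2 /qdot; qunf => a_nz.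
by congr Quat; field.
Qed.

Lemma qinv_mul_qr a b : qnorm2 a != 0 -> qr (qmul (qinv a) b) * qnorm2 a = qdot a b.
Proof.
case: a b => a0 a1 a2 a3 [b0 b1 b2 b3]; rewrite /qinv /qnorm2 /qdot; qunf => a_nz.
by field.
Qed.

Lemma qinv_mul_norm2 a b : qnorm2 a != 0 -> qnorm2 (qmul (qinv a) b) * qnorm2 a = qnorm2 b.
Proof.
case: a b => a0 a1 a2 a3 [b0 b1 b2 b3]; rewrite /qinv /qnorm2 /qdot; qunf => a_nz.
by field.
Qed.

Lemma affine_norm_dvd N (n1 n0 : R) a b K :
  N = 'X * 'X + n1%:P * 'X + n0%:P -> size N = 3%N ->
  N %| qnormpoly (qadd (qaffine a b) (qscale N K)) ->
  2 * qdot a b = n1 * qnorm2 a /\ qnorm2 b = n0 * qnorm2 a.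
Proof.
move=> NE Nsize; rewrite /qnormpoly qcongC qaffineC qcongM (qaffine_mul _ _ _ _ NE).
rewrite !dvdp_qr_cong => /(dvdp_quadratic_affine Nsize) [e1 e0].
split; apply/eqP; rewrite -subr_eq0; apply/eqP; [rewrite -[RHS]e1 | rewrite -[RHS]e0];
  qring_ext.
Qed.

Lemma affine_right_factor a p K :
  qadd (qaffine a (qopp (qmul a p))) (qscale (Nlin p) K) =
  qmul (qadd (qmul K (qXsubC (qconj p))) (quatC a)) (qXsubC p).
Proof. qring_ext. Qed.

Lemma primal_right_factor N P :
  N \is monic -> size N = 3%N -> mrpf_one P -> N %| qnormpoly P ->
  exists p P', P = qmul P' (qXsubC p) /\ Nlin p = N.
Proof.
move=> N_monic N_size P_prim N_dvd.
have NE := monic_quadraticE N_monic N_size.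
have [a [b [K PE]]] := quat_mod_quadratic P N_monic N_size.
have [e1 e0] : 2 * qdot a b = N`_1 * qnorm2 a /\ qnorm2 b = N`_0 * qnorm2 a.
  by apply: (affine_norm_dvd (K := K) NE N_size); rewrite -PE.
(* a = 0 would make N a real factor of P *)
have a_nz : qnorm2 a != 0.
  apply/eqP => a_norm0; apply: P_prim; exists N, K; split; first by rewrite N_size.
  have b_norm0 : qnorm2 b = 0 by rewrite e0 a_norm0 mulr0.
  by rewrite PE (qnorm2_eq0 a_norm0) (qnorm2_eq0 b_norm0); qring_ext.
pose p := qopp (qmul (qinv a) b).
have bE : b = qopp (qmul a p) by rewrite /p -{1}(qinvKr b a_nz); qring.
have NpE : Nlin p = N.
  have norm_p : qnorm2 p = qnorm2 (qmul (qinv a) b) by rewrite /p; qring_ext.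
  rewrite Nlin_form NE norm_p; congr (_ * _ + _%:P * _ + _%:P).
    by apply: (mulIf a_nz); rewrite -e1 -(qinv_mul_qr b a_nz) /p /=; ring.
  by apply: (mulIf a_nz); rewrite -e0 -(qinv_mul_norm2 b a_nz).
exists p, (qadd (qmul K (qXsubC (qconj p))) (quatC a)); split=> //.
by rewrite PE bE -NpE affine_right_factor.
Qed.

End PrimalFactor.

Lemma linear2_solvable (K : fieldType) (A B C r1 r2 : K) :
  A * A + B * C != 0 \/ (r1 = 0 /\ r2 = 0) ->
  exists d0 b, A * d0 - B * b + r1 = 0 /\ C * d0 + A * b + r2 = 0.
Proof.
case=> [det_nz|[-> ->]]; last by exists 0, 0; split; ring.
exists (- (r1 * A + B * r2) / (A * A + B * C)), ((C * r1 - A * r2) / (A * A + B * C)).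
by split; field.
Qed.

Section DualFactor.
Variable R : realType.
Implicit Types (a e p x z d : quat R) (K U W : quat {poly R}).

(* In the normal form P' = (a x) t + a - (a x) pbar + N_p U and
   D = e t + a z - e p + N_p W, the polynomial D + P' d is right divisible by
   t - p iff this defect z + d + x (d p - pbar d) vanishes. *)
Definition dual_defect x p z d : quat R :=
  qadd z (qadd d (qmul x (qadd (qmul d p) (qopp (qmul (qconj p) d))))).

Lemma primal_normal_form a x p U :
  qmul (qadd (qaffine (qmul a x) (qadd a (qopp (qmul (qmul a x) (qconj p)))))
             (qscale (Nlin p) U)) (qXsubC p) =
  qadd (qaffine a (qopp (qmul a p)))
       (qscale (Nlin p) (qadd (quatC (qmul a x)) (qmul U (qXsubC p)))).
Proof. qring_ext. Qed.

Lemma dual_normal_form a x p e z d U W :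
  qadd (qaffine e (qadd (qmul a z) (qopp (qmul e p)))) (qscale (Nlin p) W) =
  qadd (qadd (qmul (qadd (qaffine (qmul a x) (qadd a (qopp (qmul (qmul a x) (qconj p)))))
                         (qscale (Nlin p) U))
                   (qadd (q0 _) (qopp (quatC d))))
             (qmul (qadd (quatC (qadd e (qmul (qmul a x) d)))
                         (qmul (qadd W (qmul U (quatC d))) (qXsubC (qconj p))))
                   (qXsubC p)))
       (quatC (qmul a (dual_defect x p z d))).
Proof. rewrite /dual_defect; qring_ext. Qed.

Lemma dual_defect_family x p z (d0 b : R) :
  dual_defect x p z
    (qadd (qopp z) (qadd (qscale (- (2 * d0)) (qmul x (qvec p))) (qscale (2 * b) x))) =
  qadd (qscale (- (2 * ((1 - 2 * qdot (qvec x) (qvec p)) * d0 - 2 * qr x * b + qr z)))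
               (qmul x (qvec p)))
       (qscale (2 * (2 * qr x * qnorm2 (qvec p) * d0 + (1 - 2 * qdot (qvec x) (qvec p)) * b
                     + qdot z (qvec p))) x).
Proof. rewrite /dual_defect /qvec; qring_ext. Qed.

Lemma dual_defect_root x p z :
  (1 - 2 * qdot (qvec x) (qvec p)) * (1 - 2 * qdot (qvec x) (qvec p))
    + (2 * qr x) * (2 * qr x * qnorm2 (qvec p)) != 0
  \/ (qr z = 0 /\ qdot z (qvec p) = 0) ->
  exists d, dual_defect x p z d = q0 R.
Proof.
move=> /linear2_solvable [d0 [b [eq1 eq2]]].
exists (qadd (qopp z) (qadd (qscale (- (2 * d0)) (qmul x (qvec p))) (qscale (2 * b) x))).
by rewrite dual_defect_family eq1 eq2; qring.
Qed.

Lemma dual_defect_degenerate x p :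
  qnorm2 (qvec p) != 0 ->
  (1 - 2 * qdot (qvec x) (qvec p)) * (1 - 2 * qdot (qvec x) (qvec p))
    + (2 * qr x) * (2 * qr x * qnorm2 (qvec p)) = 0 ->
  qr x = 0 /\ 1 - 2 * qdot (qvec x) (qvec p) = 0.
Proof.
move: (1 - _) => A; rewrite /qnorm2; set rho := qdot (qvec p) (qvec p) => rho_nz det0.
have rho_ge0 : 0 <= rho by rewrite /rho /qdot /=; nra.
have x_rho0 : qr x * qr x * rho = 0 by nra.
have x0 : qr x = 0.
  by move: x_rho0 => /eqP; rewrite !mulf_eq0 (negbTE rho_nz) orbF orbb => /eqP.
by split=> //; move: det0; rewrite x0 !mulr0 mul0r addr0 => /eqP; rewrite mulf_eq0 orbb => /eqP.
Qed.

Lemma dvdp_affine0 (N : {poly R}) a b : qr a = 0 -> qr b = 0 -> N %| qr (qaffine a b).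
Proof. by move=> a0 b0; rewrite /qaffine /= a0 b0 mul0r add0r dvdp0. Qed.

Lemma degenerate_norm_dvd a x p U :
  qr x = 0 -> 1 - 2 * qdot (qvec x) (qvec p) = 0 ->
  Nlin p %| qnormpoly (qadd (qaffine (qmul a x) (qadd a (qopp (qmul (qmul a x) (qconj p)))))
                            (qscale (Nlin p) U)).
Proof.
move=> x0 x_orth; have NE := Nlin_form p.
rewrite /qnormpoly qcongC qaffineC qcongM (qaffine_mul _ _ _ _ NE) qcongDr dvdp_qr_cong.
apply: dvdp_affine0; move: x_orth;
  case: a x p x0 {NE} => a0 a1 a2 a3 [x0 x1 x2 x3] [p0 p1 p2 p3] /= -> x_orth;
  rewrite /qnorm2 /qdot; qunf; first by ring.
transitivity ((a0 * a0 + a1 * a1 + a2 * a2 + a3 * a3) *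
              (1 - 2 * (0 * 0 + x1 * p1 + x2 * p2 + x3 * p3))); first by ring.
by rewrite x_orth mulr0.
Qed.

Lemma dual_norm_dvd_compat a p e z K W :
  Nlin p %| qr (qadd (qmul (qadd (qaffine a (qopp (qmul a p))) (qscale (Nlin p) K))
                           (qconj (qadd (qaffine e (qadd (qmul a z) (qopp (qmul e p))))
                                        (qscale (Nlin p) W))))
                     (qmul (qadd (qaffine e (qadd (qmul a z) (qopp (qmul e p))))
                                 (qscale (Nlin p) W))
                           (qconj (qadd (qaffine a (qopp (qmul a p))) (qscale (Nlin p) K))))) ->
  qnorm2 a * qr z = 0 /\ qnorm2 a * qdot z (qvec p) = 0.
Proof.
have NE := Nlin_form p.
rewrite !qcongC !qaffineC !qcongM !(qaffine_mul _ _ _ _ NE) !qcongDr qcongD qaffineD.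
rewrite dvdp_qr_cong => /(dvdp_quadratic_affine (proj2 (Nlin_monic p))) [].
case: a p e z {NE} => a0 a1 a2 a3 [p0 p1 p2 p3] [e0 e1 e2 e3] [z0 z1 z2 z3].
rewrite /qnorm2 /qdot /qvec; qunf => H1 H0.
have h1 : (a0 * a0 + a1 * a1 + a2 * a2 + a3 * a3) * z0 = 0 by lra.
have h1p : p0 * ((a0 * a0 + a1 * a1 + a2 * a2 + a3 * a3) * z0) = 0 by rewrite h1 mulr0.
by split; lra.
Qed.

End DualFactor.

Section DualRightFactor.
Variable R : realType.

Lemma dual_right_factor (P' D : quat {poly R}) (p : quat R) :
  qnorm2 (qvec p) != 0 -> mrpf_one (qmul P' (qXsubC p)) ->
  (Nlin p %| qnormpoly P' -> Nlin p %| (dqnormpoly (DQuat (qmul P' (qXsubC p)) D)).2) ->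
  exists d D', DQuat (qmul P' (qXsubC p)) D = dqmul (DQuat P' D') (dqlin (DQuat p d)).
Proof.
move=> p_nonreal P_prim dual_dvd.
have [N_monic N_size] := Nlin_monic p.
have [u [v [U P'E]]] := quat_mod_quadratic P' N_monic N_size.
have [e [f [W DE]]] := quat_mod_quadratic D N_monic N_size.
(* normal forms P' = u t + a - u pbar + N_p U and D = e t + c - e p + N_p W *)
have [a vE] : exists a, v = qadd a (qopp (qmul u (qconj p))).
  by exists (qadd (qmul u (qconj p)) v); qring.
have [c fE] : exists c, f = qadd c (qopp (qmul e p)).
  by exists (qadd (qmul e p) f); qring.
rewrite {}vE in P'E; rewrite {}fE in DE.
(* a = 0 would make N_p a real factor of P' (t - p) *)
have a_nz : qnorm2 a != 0.
  apply/eqP => /qnorm2_eq0 a0; apply: P_prim.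
  exists (Nlin p), (qadd (quatC u) (qmul U (qXsubC p))); split; first by rewrite N_size.
  by rewrite P'E a0; qring_ext.
(* u = a x and c = a z *)
rewrite -(qinvKr u a_nz) in P'E; rewrite -(qinvKr c a_nz) in DE.
move: P'E DE; set x := qmul (qinv a) u; set z := qmul (qinv a) c.
clearbody x z => P'E DE; clear u c.
(* the defect equation is solvable: in the degenerate case N_p divides
   P' P'bar, hence the dual norm part, which forces compatibility *)
have compat : (1 - 2 * qdot (qvec x) (qvec p)) * (1 - 2 * qdot (qvec x) (qvec p))
    + (2 * qr x) * (2 * qr x * qnorm2 (qvec p)) != 0
  \/ (qr z = 0 /\ qdot z (qvec p) = 0).
  have [/(dual_defect_degenerate p_nonreal) [x0 x_orth]|] := eqVneq _ 0; last by left.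
  right; have P'_dvd := degenerate_norm_dvd a U x0 x_orth; rewrite -P'E in P'_dvd.
  have : Nlin p %| qr (qadd (qmul (qmul P' (qXsubC p)) (qconj D))
                             (qmul D (qconj (qmul P' (qXsubC p))))) := dual_dvd P'_dvd.
  rewrite P'E primal_normal_form DE => /dual_norm_dvd_compat.
  move=> [/eqP + /eqP]; rewrite !mulf_eq0 (negbTE a_nz) /=.
  by move=> /eqP z0 /eqP z_orth.
have [d defect0] := dual_defect_root compat.
exists d, (qadd (quatC (qadd e (qmul (qmul a x) d)))
                (qmul (qadd W (qmul U (quatC d))) (qXsubC (qconj p)))).
suff -> : D = qadd (qmul P' (qadd (q0 _) (qopp (quatC d))))
                   (qmul (qadd (quatC (qadd e (qmul (qmul a x) d)))
                               (qmul (qadd W (qmul U (quatC d))) (qXsubC (qconj p))))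
                         (qXsubC p)) by [].
by rewrite DE (dual_normal_form a x p e z d U W) defect0 P'E; qring.
Qed.

End DualRightFactor.

Section Degree.
Variable R : realType.
Implicit Types (M : dquat {poly R}) (Q : quat {poly R}).

Definition dq0 : dquat R := DQuat (q0 R) (q0 R).

Definition monic_deg M (k : nat) : Prop :=
  dqcoef M k = dq1 R /\ forall j, (k < j)%N -> dqcoef M j = dq0.

Lemma dqcoef_ge_size M j : (dqsize M <= j)%N -> dqcoef M j = dq0.
Proof.
case: M => [[a b c d] [e f g h]]; rewrite /dqsize /qsize /= => size_le.
by rewrite /dqcoef /qcoef /dq0 /q0 /= !nth_default //; lia.
Qed.

Lemma monic_deg_size M : dqmonic M -> monic_deg M (dqsize M).-1.
Proof. by move=> [size_gt0 lead1]; split=> // j j_gt; apply: dqcoef_ge_size; lia. Qed.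

Lemma qcoefD Q Q' j : qcoef (qadd Q Q') j = qadd (qcoef Q j) (qcoef Q' j).
Proof. by rewrite /qcoef /qadd /= !coefD. Qed.

Lemma qcoefN Q j : qcoef (qopp Q) j = qopp (qcoef Q j).
Proof. by rewrite /qcoef /qopp /= !coefN. Qed.

Lemma qcoefMC Q (h : quat R) j : qcoef (qmul Q (quatC h)) j = qmul (qcoef Q j) h.
Proof. by rewrite /qcoef /qmul /quatC /= !(coefD, coefB, coefN, coefMC). Qed.

Lemma qcoefMX Q j : qcoef (qmul Q (qX R)) j = if j is j'.+1 then qcoef Q j' else q0 R.
Proof.
rewrite /qcoef /qmul /qX /= ?mulr0 ?subr0 ?addr0 ?mul0r ?add0r ?addr0 ?sub0r ?subr0 !coefMX.
by case: j.
Qed.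

Lemma dqcoef_mul_lin M (h : dquat R) j :
  dqcoef (dqmul M (dqlin h)) j.+1 = dqadd (dqcoef M j) (dqopp (dqmul (dqcoef M j.+1) h)).
Proof.
case: M h => P D [p d].
have linE : dqmul (DQuat P D) (dqlin (DQuat p d)) =
  DQuat (qadd (qmul P (qX R)) (qopp (qmul P (quatC p))))
        (qadd (qopp (qmul P (quatC d))) (qadd (qmul D (qX R)) (qopp (qmul D (quatC p))))).
  by qring_ext.
rewrite linE /dqcoef /= !(qcoefD, qcoefN, qcoefMC, qcoefMX); qring.
Qed.

Lemma monic_deg_lin M (h : dquat R) k :
  monic_deg (dqmul M (dqlin h)) k.+1 -> monic_deg M k.
Proof.
move=> [lead1 high0].
have coefE j : dqcoef M j = dqadd (dqcoef (dqmul M (dqlin h)) j.+1) (dqmul (dqcoef M j.+1) h).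
  by rewrite dqcoef_mul_lin; case: (dqcoef M j) (dqcoef M j.+1) => [[? ? ? ?] [? ? ? ?]]
     [[? ? ? ?] [? ? ? ?]]; qring.
have drop0 X : dqadd X (dqmul dq0 h) = X by rewrite /dq0; qring.
(* downward induction from the size of M *)
have high0' i j : (dqsize M - j <= i)%N -> (k < j)%N -> dqcoef M j = dq0.
  elim: i j => [|i IH] j j_big k_lt; first by apply: dqcoef_ge_size; lia.
  have [/dqcoef_ge_size //|j_lt] := leqP (dqsize M) j.
  by rewrite coefE high0 ?IH ?drop0 //; lia.
split; last by move=> j j_gt; apply: (high0' (dqsize M - j)%N).
by rewrite coefE lead1 (high0' (dqsize M - k.+1)%N) // drop0.
Qed.

Lemma qconst Q : (forall j, (0 < j)%N -> qcoef Q j = q0 R) -> Q = quatC (qcoef Q 0).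
Proof.
case: Q => a b c d high0.
have const (x : {poly R}) : (forall j, (0 < j)%N -> x`_j = 0) -> x = (x`_0)%:P.
  by move=> x0; apply: size1_polyC; apply/leq_sizeP => -[|j] // _; apply: x0.
by rewrite /quatC /= -!const // => j /high0 [].
Qed.

Lemma monic_deg0 M : monic_deg M 0 -> M = dq1 _.
Proof.
case: M => P D [lead1 high0].
have -> : P = quatC (qcoef P 0) by apply: qconst => j /high0 /(f_equal (@prim _)).
have -> : D = quatC (qcoef D 0) by apply: qconst => j /high0 /(f_equal (@dual _)).
move: lead1; rewrite /dqcoef /qcoef /quatC /dq1 /q1 /q0 /=.
by case=> -> -> -> -> -> -> -> ->; rewrite polyC1 polyC0.
Qed.

Lemma monic_deg_norm_size P D k : monic_deg (DQuat P D) k -> size (qnormpoly P) = k.*2.+1.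
Proof.
case: P => a b c d [lead1 high0]; case: lead1 => ak bk ck dk _ _ _ _.
have high0' j : (k < j)%N -> [/\ a`_j = 0, b`_j = 0, c`_j = 0 & d`_j = 0].
  by move=> /high0 [-> -> -> -> _ _ _ _].
have size_a : size a = k.+1.
  apply/eqP; rewrite eqn_leq; apply/andP; split.
    by apply/leq_sizeP => j /high0' [].
  rewrite ltnNge; apply/negP => small.
  by move: ak; rewrite nth_default // => /esym/eqP; rewrite oner_eq0.
have small (x : {poly R}) : x`_k = 0 -> (forall j, (k < j)%N -> x`_j = 0) -> (size x <= k)%N.
  by move=> xk xj; apply/leq_sizeP => j; rewrite leq_eqVlt => /orP [/eqP <- //|/xj].
have size_b : (size b <= k)%N by apply: small => // j /high0' [].
have size_c : (size c <= k)%N by apply: small => // j /high0' [].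
have size_d : (size d <= k)%N by apply: small => // j /high0' [].
have -> : qnormpoly (Quat a b c d) = a * a + (b * b + c * c + d * d) by qring.
have a_nz : a != 0 by rewrite -size_poly_eq0 size_a.
have size_aa : size (a * a) = k.*2.+1 by rewrite size_mul // size_a; lia.
rewrite size_polyDl size_aa //.
have size_sq (x : {poly R}) : (size x <= k)%N -> (size (x * x)%R < k.*2.+1)%N.
  by move=> x_small; apply: (leq_ltn_trans (size_polyMleq _ _)); lia.
by apply: (leq_ltn_trans (size_polyD _ _)); rewrite gtn_max size_sq // andbT;
  apply: (leq_ltn_trans (size_polyD _ _)); rewrite gtn_max !size_sq.
Qed.

End Degree.

Lemma foldr_dqlin_rcons (R : realType) (hs : seq (dquat R)) (h : dquat R) :
  foldr (@dqmul _) (dq1 _) (map (@dqlin R) (rcons hs h)) =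
  dqmul (foldr (@dqmul _) (dq1 _) (map (@dqlin R) hs)) (dqlin h).
Proof.
elim: hs => [|a hs IH] /=; first by rewrite dqmul1 dq1mul.
by rewrite IH dqmulA.
Qed.

Lemma mrpf_one_left_factor (R : realType) (P' Q : quat {poly R}) :
  mrpf_one (qmul P' Q) -> mrpf_one P'.
Proof.
move=> PQ_prim [c [X [c_nonconst P'E]]]; apply: PQ_prim.
by exists c, (qmul X Q); rewrite P'E qscale_mul.
Qed.

Lemma dnum_dvdE (R : realType) (F : {poly R}) (x : {poly R} * {poly R}) :
  F %| x.1 -> (dnum_dvd F x <-> F %| x.2).
Proof.
case: x => a b /= Fa; split; first by move=> [[y1 y2] [_ ->]]; rewrite mul0r addr0 dvdp_mulr.
move=> Fb; exists (a %/ F, b %/ F); rewrite /dnum_mul /=.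
by rewrite mul0r addr0 mulrC divpK // mulrC divpK.
Qed.

Section Criterion.
Variables (R : realType) (m : nat) (N : 'I_m -> {poly R}).
Hypotheses (N_monic : forall i, N i \is monic) (N_size : forall i, size (N i) = 3%N)
  (N_irr : forall i, irreducible_poly (N i))
  (N_coprime : forall i j, i != j -> coprimep (N i) (N j)).
Implicit Types (n : 'I_m -> nat) (M : dquat {poly R}).

Local Notation Nprod n := (\prod_(j < m) N j ^+ n j).
Local Notation Fprod n := (\prod_(j < m) N j ^+ (n j).-1).

Lemma linfact_dual_norm_dvd (hs : seq (dquat R)) n :
  (dqnormpoly (foldr (@dqmul _) (dq1 _) (map (@dqlin R) hs))).1 = Nprod n ->
  Fprod n %| (dqnormpoly (foldr (@dqmul _) (dq1 _) (map (@dqlin R) hs))).2.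
Proof.
elim: hs n => [|h hs IH] n; cbn [foldr map].
  by have -> : (dqnormpoly (dq1 {poly R})).2 = 0 by qring.
rewrite dqnormM /dnum_mul; cbn [fst snd].
set X := foldr _ _ _; have -> : (dqnormpoly (dqlin h)).1 = Nlin (prim h) by [].
move=> normE.
have [Nh_monic Nh_size] := Nlin_monic (prim h).
have [i [NhE ni_gt0]] : exists i, Nlin (prim h) = N i /\ (0 < n i)%N.
  by apply: quadratic_dvd_prod => //; rewrite -normE dvdp_mulr.
have Ni_nz : N i != 0 by rewrite -size_poly_eq0 N_size.
have normX : (dqnormpoly X).1 = Nprod (decr n i).
  by apply: (mulfI Ni_nz); rewrite -(prod_decr _ ni_gt0) -normE NhE.
apply: dvdp_add; last by apply: dvdp_mull; rewrite normX prod_pred_dvd_decr.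
have [|ni_gt1|ni1] := ltngtP (n i) 1; first by lia.
  by rewrite (prod_pred_decr _ ni_gt1) NhE dvdp_mul // IH.
by rewrite (prod_pred_decr1 _ ni1) dvdp_mull // IH.
Qed.

(* A monic M of positive degree has a nonconstant primal norm, so some
   exponent n_i is positive. *)
Lemma exists_exponent_pos P D k n :
  monic_deg (DQuat P D) k.+1 -> qnormpoly P = Nprod n -> exists i, (0 < n i)%N.
Proof.
move=> M_deg normE; apply/existsP; apply: contraT; rewrite negb_exists => /forallP n0.
have prod1 : Nprod n = 1 by apply: big1 => j _; move: (n0 j); rewrite lt0n negbK => /eqP ->.
by move: (monic_deg_norm_size M_deg); rewrite normE prod1 size_poly1; lia.
Qed.

Lemma dual_norm_dvd_descends M' (h : dquat R) n i :
  (0 < n i)%N -> (dqnormpoly M').1 = Nprod (decr n i) -> Nlin (prim h) = N i ->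
  Fprod n %| (dqnormpoly (dqmul M' (dqlin h))).2 -> Fprod (decr n i) %| (dqnormpoly M').2.
Proof.
move=> ni_gt0 normM' Nh; rewrite dqnormM /dnum_mul; cbn [fst snd]; rewrite normM'.
have -> : (dqnormpoly (dqlin h)).1 = N i := Nh.
rewrite dvdp_addr; last first.
  by apply: dvdp_mulr; apply: prod_pred_dvd_decr.
have [|ni_gt1|ni1] := ltngtP (n i) 1; first by lia.
  by rewrite (prod_pred_decr _ ni_gt1) [_ * N i]mulrC dvdp_mul2l // -size_poly_eq0 N_size.
rewrite (prod_pred_decr1 _ ni1) Gauss_dvdpl // coprimep_sym.
by apply: coprimep_prod => //; rewrite /decr eqxx ni1.
Qed.

Lemma split_linear_factor P D k n :
  monic_deg (DQuat P D) k.+1 -> mrpf_one P -> qnormpoly P = Nprod n ->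
  Fprod n %| (dqnormpoly (DQuat P D)).2 ->
  exists h P' D' i, DQuat P D = dqmul (DQuat P' D') (dqlin h) /\ monic_deg (DQuat P' D') k
    /\ mrpf_one P' /\ qnormpoly P' = Nprod (decr n i)
    /\ Fprod (decr n i) %| (dqnormpoly (DQuat P' D')).2.
Proof.
move=> M_deg P_prim normP dual_dvd.
have [i ni_gt0] := exists_exponent_pos M_deg normP.
have Ni_nz : N i != 0 by rewrite -size_poly_eq0 N_size.
have [p [P' [PE Np]]] : exists p P', P = qmul P' (qXsubC p) /\ Nlin p = N i.
  by apply: primal_right_factor => //; rewrite normP (prod_decr _ ni_gt0) dvdp_mulr.
have normP' : qnormpoly P' = Nprod (decr n i).
  apply: (mulIf Ni_nz).
  by rewrite [RHS]mulrC -(prod_decr _ ni_gt0) -normP PE qnormM -/(Nlin p) Np.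
have [d [D' ME]] : exists d D', DQuat P D = dqmul (DQuat P' D') (dqlin (DQuat p d)).
  rewrite PE; apply: dual_right_factor; rewrite -?PE //.
    by apply: Nlin_irreducible_nonreal; rewrite Np.
  rewrite Np normP' => Ni_dvd; apply: dvdp_trans dual_dvd.
  have Ni_nonconst : size (N i) != 1%N by rewrite N_size.
  have ni_gt1 : (1 < n i)%N.
    by have := Ndvd_prod_exponent N_coprime Ni_nonconst Ni_dvd; rewrite /decr eqxx; lia.
  by rewrite (prod_pred_decr _ ni_gt1) dvdp_mulr.
exists (DQuat p d), P', D', i; split=> //; split.
  by apply: (monic_deg_lin (h := DQuat p d)); rewrite -ME.
split; first by apply: (@mrpf_one_left_factor _ _ (qXsubC p)); rewrite -PE.
split=> //; apply: (dual_norm_dvd_descends (M' := DQuat P' D') (h := DQuat p d)) => //.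
by rewrite -ME.
Qed.

Lemma dual_norm_dvd_linfact k M n :
  monic_deg M k -> mrpf_one (prim M) -> qnormpoly (prim M) = Nprod n ->
  Fprod n %| (dqnormpoly M).2 -> dq_linfact M.
Proof.
elim: k M n => [|k IH] [P D] n M_deg P_prim normP dual_dvd.
  by exists [::]; rewrite (monic_deg0 M_deg).
have [h [P' [D' [i [ME [M'_deg [P'_prim [normP' dual_dvd']]]]]]]] :=
  split_linear_factor M_deg P_prim normP dual_dvd.
have [hs M'E] := IH _ _ M'_deg P'_prim normP' dual_dvd'.
by exists (rcons hs h); rewrite ME M'E foldr_dqlin_rcons.
Qed.

End Criterion.

Unset Implicit Arguments.

Theorem theorem1 (R : realType) (M : dquat {poly R})
  (m : nat) (N : 'I_m -> {poly R}) (n : 'I_m -> nat) :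
  dqmonic M ->
  mrpf_one (prim M) ->
  (forall i, N i \is monic) ->
  (forall i, size (N i) = 3%N) ->
  (forall i, irreducible_poly (N i)) ->
  (forall i j, i != j -> coprimep (N i) (N j)) ->
  (forall i, (0 < n i)%N) ->
  qnormpoly (prim M) = \prod_(i < m) N i ^+ n i ->
  (dq_linfact M <-> dnum_dvd (\prod_(i < m) N i ^+ (n i).-1) (dqnormpoly M))
  /\
  (dnum_dvd (\prod_(i < m) N i ^+ (n i).-1) (dqnormpoly M) <->
   (\prod_(i < m) N i ^+ (n i).-1) %| (dqnormpoly M).2).
Proof.
move=> M_monic P_prim N_monic N_size N_irr N_coprime _ normP.
have F_dvd_primal : \prod_(i < m) N i ^+ (n i).-1 %| (dqnormpoly M).1.
  have -> : (dqnormpoly M).1 = qnormpoly (prim M) by [].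
  by rewrite normP prod_pred_dvd.
rewrite (dnum_dvdE F_dvd_primal); split=> //; split.
  by move=> [hs ME]; rewrite ME; apply: linfact_dual_norm_dvd => //; rewrite -ME.
exact: dual_norm_dvd_linfact (monic_deg_size M_monic) P_prim normP.
Qed.
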